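(* In the truncated Gale–Shapley algorithm described in the context, for every round $i\ge1$: an edge $\{r,b\}\in E\setminus M_i$ with $r\in R$, $b\in B$ is unstable relative to $M_i$ only if $b$ belongs to $C_i(r)$ and $r$ is unmatched at the end of round $i$ (i.e. $p_i(r)=\bot$).
   Context: Instance: a simple bipartite graph $\mathcal{G}=(R\cup B,E)$ (red nodes $R$, blue nodes $B$) without isolated nodes, each node having a linear preference order on its neighbours. An edge $\{u,v\}\in E\setminus M$ is unstable relative to a matching $M$ if (i) $u$ is unmatched or prefers $v$ to its partner in $M$, and (ii) $v$ is unmatched or prefers $u$ to its partner in $M$. Algorithm (distributed Gale–Shapley): each blue $b$ keeps $p(b)$ (current partner or $\bot$), initially $\bot$. Each red $r$ keeps a list $C(r)$, initially all neighbours in decreasing preference; $c(r)$ (candidate awaiting response, or $\bot$), initially $\bot$; $p(r)$ (partner or $\bot$), initially $\bot$. Each round consists of a blue turn then a red turn. Blue turn, for each $b$: let $P$ be the set of neighbours that sent `propose'; if $P=\emptyset$ do nothing. Otherwise let $Q=P\cup\{p(b)\}$ if $p(b)\ne\bot$, else $Q=P$; let $q$ be $b$'s most preferred node in $Q$; if $q\ne p(b)$, send `break' to $p(b)$ (if $p(b)\ne\bot$), send `accept' to $q$, and set $p(b)\gets q$; send `reject' to every $r\in P\setminus\{q\}$. Red turn, for each $r$: (1) if $c(r)\neq\bot$, receive the message from $c(r)$; if `accept' set $p(r)\gets c(r)$; if `reject' remove $c(r)$ from $C(r)$; then set $c(r)\gets\bot$. (2) If $p(r)\ne\bot$ and $p(r)$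 sent `break', remove $p(r)$ from $C(r)$ and set $p(r)\gets\bot$. (3) If $p(r)=\bot$ and $C(r)$ is nonempty, set $c(r)$ to the first element of $C(r)$ and send `propose' to it. Notation: a subscript $i$ denotes the value at the end of round $i$ (e.g. $C_i(r)$, $p_i(r)$), and $M_i=\{\{r,p_i(r)\}: r\in R,\ p_i(r)\ne\bot\}$ is the matching at the end of round $i$. *)

From mathcomp Require Import all_boot.
Set Implicit Arguments. Unset Strict Implicit. Unset Printing Implicit Defensive.

(* The preference order of a red node r is the
   list prefR r of its neighbours in decreasing preference (most preferred
   first); similarly prefB b for a blue node b. *)

Definition prefersR (R B : eqType) (prefR : R -> seq B) (r : R) (b1 b2 : B) :=
  index b1 (prefR r) < index b2 (prefR r).
Definition prefersB (R B : eqType) (prefB : B -> seq R) (b : B) (r1 r2 : R) :=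
  index r1 (prefB b) < index r2 (prefB b).

(* Algorithm state at the end of a round.  None plays the role of bot.
   pB = p(b), CR = C(r), cR = c(r), pR = p(r). *)
Record state (R B : Type) := State {
  pB : B -> option R;
  CR : R -> seq B;
  cR : R -> option B;
  pR : R -> option B }.

Section Round.
Variables (R B : finType) (prefB : B -> seq R) (s : state R B).

(* The 'propose' messages sent during the red turn are exactly those sent by r
   to c(r) (c(r) is reset to bot at step (1) and only set in step (3), when
   'propose' is sent to it). *)
Definition proposers (b : B) : {set R} := [set r | cR s r == Some b].

Definition blue_new (b : B) : option R :=
  let P := proposers b in
  if P == set0 then pB s b else
  let Q := P :|: (if pB s b is Some r then [set r] else set0) in
  [pick q in Q | [forall r in Q, index q (prefB b) <= index r (prefB b)]].

Definition accept_msg (b : B) (r : R) : bool :=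
  (blue_new b == Some r) && (pB s b != Some r).
Definition reject_msg (b : B) (r : R) : bool :=
  (r \in proposers b) && (blue_new b != Some r).
Definition break_msg (b : B) (r : R) : bool :=
  (pB s b == Some r) && (blue_new b != Some r).

Definition red_new (r : R) : seq B * option B * option B :=
  let '(C1, p1) :=
    match cR s r with
    | Some b => (if reject_msg b r then rem b (CR s r) else CR s r,
                 if accept_msg b r then Some b else pR s r)
    | None => (CR s r, pR s r)
    end in
  let '(C2, p2) :=
    match p1 with
    | Some b' => if break_msg b' r then (rem b' C1, None) else (C1, p1)
    | None => (C1, p1)
    end in
  let c3 := if p2 is None then (if C2 is b0 :: _ then Some b0 else None)
            else None in
  (C2, c3, p2).

Definition round : state R B :=
  State blue_new (fun r => (red_new r).1.1) (fun r => (red_new r).1.2)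
        (fun r => (red_new r).2).
End Round.

Definition init_state (R B : finType) (prefR : R -> seq B) : state R B :=
  State (fun _ => None) prefR (fun _ => None) (fun _ => None).

Definition gs_state (R B : finType) (prefR : R -> seq B) (prefB : B -> seq R)
    (i : nat) : state R B :=
  iter i (round prefB) (init_state prefR).

(* The matching M_i is {{r, p_i(r)} : p_i(r) <> bot}; it is given here by the
   function M := p_i.  Edge {r,b} is unstable relative to M. *)
Definition unstable (R B : finType) (adj : R -> B -> bool)
    (prefR : R -> seq B) (prefB : B -> seq R) (M : R -> option B)
    (r : R) (b : B) : Prop :=
  [/\ adj r b,
      M r <> Some b,
      (forall b', M r = Some b' -> prefersR prefR r b b') &
      (forall r', M r' = Some b -> prefersB prefB b r r')].

From mathcomp Require Import all_boot.
Set Implicit Arguments. Unset Strict Implicit. Unset Printing Implicit Defensive.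

(* The state of every round satisfies an invariant [gs_inv]: each list C(r) is
   a suffix of r's preference list headed by r's partner or candidate, the
   partner pointers of both sides agree, and whenever r has crossed b off its
   list, b holds a partner it prefers to r (blue nodes only ever trade up).
   For an unstable edge {r, b}, the last clause forces b to still be in C(r);
   and if r had a partner b', then b' would head the suffix C(r) containing b,
   so r would prefer b' to b. *)

Lemma ohead_behead (T : Type) (s : seq T) x :
  ohead s = Some x -> s = x :: behead s.
Proof. by case: s => //= y s [->]. Qed.

Lemma index_ohead_drop (T : eqType) (s : seq T) k x y :
  uniq s -> ohead (drop k s) = Some x -> y \in drop k s ->
  index x s <= index y s.
Proof.
move=> us hd y_in; have dkE := ohead_behead hd.
move: us; rewrite -{1}(cat_take_drop k s) cat_uniq => /and3P[_ disj _].
have not_take z : z \in drop k s -> z \notin take k s.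
  by move=> z_in; apply: contra disj => z_take; apply/hasP; exists z.
have x_in : x \in drop k s by rewrite dkE mem_head.
have index_drop z : z \in drop k s -> index z s = size (take k s) + index z (drop k s).
  by move=> z_in; rewrite -{1}(cat_take_drop k s) index_cat (negbTE (not_take _ z_in)).
by rewrite !index_drop // dkE /= eqxx addn0 leq_addr.
Qed.

Lemma index_lt_neq (T : eqType) (s : seq T) x y :
  y \in s -> index x s <= index y s -> x != y -> index x s < index y s.
Proof.
move=> y_in le_xy neq_xy; rewrite ltn_neqAle le_xy andbT.
apply: contra neq_xy => /eqP eq_idx.
have x_in : x \in s by rewrite -index_mem eq_idx index_mem.
by rewrite -(nth_index x x_in) eq_idx nth_index.
Qed.

Section GaleShapley.
Variables (R B : finType) (prefR : R -> seq B) (prefB : B -> seq R).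

Definition suitors (s : state R B) (b : B) : {set R} :=
  proposers s b :|: (if pB s b is Some r0 then [set r0] else set0).

Lemma in_suitors s b r :
  (r \in suitors s b) = (cR s r == Some b) || (pB s b == Some r).
Proof.
rewrite /suitors !inE; case: (pB s b) => [r0|]; last by rewrite inE orbF.
by rewrite inE (eq_sym r).
Qed.

Lemma blue_new_suitor s b r :
  blue_new prefB s b = Some r -> r \in suitors s b.
Proof.
rewrite /blue_new -/(suitors s b); case: ifP => _.
  by move=> pbE; rewrite in_suitors pbE eqxx orbT.
by case: pickP => // q /andP[q_in _] [<-].
Qed.

Lemma blue_new_le s b r : r \in suitors s b ->
  exists2 q, blue_new prefB s b = Some q & index q (prefB b) <= index r (prefB b).
Proof.
move=> r_in; rewrite /blue_new -/(suitors s b); case: ifPn => [/eqP P0 | _].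
  have : r \in proposers s b = false by rewrite P0 inE.
  rewrite inE => r_out; move: r_in; rewrite in_suitors r_out => /eqP ->.
  by exists r.
case: pickP => [q /andP[_ /forallP q_min] | no_min].
  by exists q => //; exact: implyP (q_min r) r_in.
have [q q_in q_min] := arg_minnP (fun q => index q (prefB b)) r_in.
have /negP[] := negbT (no_min q); rewrite [q \in _]q_in.
by apply/forallP => r'; apply/implyP; exact: q_min.
Qed.

Record gs_inv (s : state R B) : Prop := GsInv {
  gs_suffix : forall r, exists k, CR s r = drop k (prefR r);
  gs_partner_head : forall r b, pR s r = Some b -> ohead (CR s r) = Some b;
  gs_candidate_head : forall r b, cR s r = Some b -> ohead (CR s r) = Some b;
  gs_partner_sym : forall r b, pR s r = Some b <-> pB s b = Some r;
  gs_unmatched_or_idle : forall r, pR s r = None \/ cR s r = None;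
  gs_crossed_off : forall r b, b \in prefR r -> b \notin CR s r ->
    exists2 r', pB s b = Some r' & prefersB prefB b r' r }.

Lemma gs_inv_init : gs_inv (init_state prefR).
Proof.
split=> //= r; first by exists 0; rewrite drop0.
  by left.
by move=> b ->.
Qed.

Variant red_new_spec (s : state R B) (r : R) :
    seq B * option B * option B -> Prop :=
| RedAccepted b of cR s r = Some b & pR s r = None &
    blue_new prefB s b = Some r : red_new_spec s r (CR s r, None, Some b)
| RedRejected b of cR s r = Some b & pR s r = None &
    blue_new prefB s b != Some r :
    red_new_spec s r (behead (CR s r), ohead (behead (CR s r)), None)
| RedKept b of cR s r = None & pR s r = Some b &
    blue_new prefB s b = Some r : red_new_spec s r (CR s r, None, Some b)
| RedDumped b of cR s r = None & pR s r = Some b &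
    blue_new prefB s b != Some r :
    red_new_spec s r (behead (CR s r), ohead (behead (CR s r)), None)
| RedIdle of cR s r = None & pR s r = None :
    red_new_spec s r (CR s r, ohead (CR s r), None).

Lemma red_newP s r : gs_inv s -> red_new_spec s r (red_new prefB s r).
Proof.
move=> I; rewrite /red_new.
case cE: (cR s r) => [b|].
  have pE : pR s r = None by case: (gs_unmatched_or_idle I r) => //; rewrite cE.
  have pbN : pB s b != Some r by apply/eqP => /(gs_partner_sym I); rewrite pE.
  have r_prop : r \in proposers s b by rewrite inE cE.
  rewrite /accept_msg /reject_msg /break_msg r_prop pbN andbT /=.
  case: eqP => [acc | /eqP rej] /=.
    by rewrite (negbTE pbN); exact: (RedAccepted cE pE acc).
  rewrite pE {1 2}(ohead_behead (gs_candidate_head I cE)) /= eqxx.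
  exact: (RedRejected cE pE rej).
case pE: (pR s r) => [b|]; last exact: (RedIdle cE pE).
rewrite /break_msg (gs_partner_sym I r b).1 // eqxx /=.
case: eqP => [kept | /eqP dumped] /=; first exact: (RedKept cE pE kept).
rewrite {1 2}(ohead_behead (gs_partner_head I pE)) /= eqxx.
exact: (RedDumped cE pE dumped).
Qed.

Section Round.
Variable s : state R B.
Hypothesis I : gs_inv s.
Hypothesis acceptable : forall r b, b \in prefR r -> r \in prefB b.

Lemma suitor_is_partner_or_candidate r b : r \in suitors s b ->
  (cR s r == Some b) || (pR s r == Some b).
Proof.
rewrite in_suitors; case: (cR s r == Some b) => //= /eqP.
by move/(gs_partner_sym I) ->.
Qed.

Lemma round_partner_sym r b :
  pR (round prefB s) r = Some b <-> pB (round prefB s) b = Some r.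
Proof.
rewrite /=; split; first by case: (red_newP r I) => //= b' _ _ acc [<-].
move=> new; have := suitor_is_partner_or_candidate (blue_new_suitor new).
case: (red_newP r I) => [b' cE pE _|b' cE pE rej|b' cE pE _|b' cE pE rej|cE pE] /=;
  rewrite ?cE ?pE ?orbF //= => /eqP[bE]; subst b' => //; by rewrite new eqxx in rej.
Qed.

Lemma round_crossed_off r b : b \in prefR r -> b \notin CR (round prefB s) r ->
  exists2 r', pB (round prefB s) b = Some r' & prefersB prefB b r' r.
Proof.
move=> b_pref /=; have [b_in | b_out] := boolP (b \in CR s r); last first.
  move=> _; case: (gs_crossed_off I b_pref b_out) => r0 pbE r0_better.
  have r0_suit : r0 \in suitors s b by rewrite in_suitors pbE eqxx orbT.
  have [r' -> le_r'] := blue_new_le r0_suit.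
  by exists r' => //; exact: leq_ltn_trans le_r' r0_better.
have dropped_head b0 : ohead (CR s r) = Some b0 -> b \notin behead (CR s r) -> b = b0.
  move=> hd b_out; have CE := ohead_behead hd.
  by move: b_in b_out; rewrite CE inE => /orP[/eqP|] ->.
have rejected_by_b : r \in suitors s b -> blue_new prefB s b != Some r ->
    exists2 r', blue_new prefB s b = Some r' & prefersB prefB b r' r.
  move=> r_suit rej; have [q qE le_q] := blue_new_le r_suit.
  exists q => //; apply: index_lt_neq le_q _; first exact: acceptable.
  by apply: contra rej => /eqP <-; rewrite qE.
case: (red_newP r I) => [b0|b0 cE _ rej|b0|b0 _ pE rej|] /=;
  rewrite ?b_in // => /dropped_head.
- move=> /(_ _ (gs_candidate_head I cE)) bE; subst b0.
  by apply: rejected_by_b rej; rewrite in_suitors cE eqxx.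
- move=> /(_ _ (gs_partner_head I pE)) bE; subst b0.
  by apply: rejected_by_b rej; rewrite in_suitors (gs_partner_sym I r b).1 ?eqxx ?orbT.
Qed.

Lemma gs_inv_round : gs_inv (round prefB s).
Proof.
split; [move=> r | move=> r b | move=> r b | exact: round_partner_sym
       | move=> r | exact: round_crossed_off]; rewrite /=.
- have [k CE] := gs_suffix I r.
  case: (red_newP r I) => *;
    [exists k | exists k.+1 | exists k | exists k.+1 | exists k];
    by rewrite CE // -drop1 drop_drop add1n.
- case: (red_newP r I) => //= b' cE pE _ [<-];
    [exact: gs_candidate_head cE | exact: gs_partner_head pE].
- by case: (red_newP r I) => * //=; case.
- by case: (red_newP r I) => *; [right | left | right | left | left].
Qed.

End Round.

Lemma gs_inv_gs_state i : (forall r b, b \in prefR r -> r \in prefB b) ->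
  gs_inv (gs_state prefR prefB i).
Proof.
move=> acceptable; elim: i => [|i IH]; first exact: gs_inv_init.
by rewrite /gs_state iterS; exact: gs_inv_round.
Qed.

Lemma gs_inv_in_CR s r b : gs_inv s -> b \in prefR r ->
  (forall r', pR s r' = Some b -> prefersB prefB b r r') -> b \in CR s r.
Proof.
move=> I b_pref b_prefers; apply/negPn/negP => /(gs_crossed_off I b_pref) [r'].
move=> /(gs_partner_sym I) /b_prefers.
by rewrite /prefersB => lt_r_r' /(ltn_trans lt_r_r'); rewrite ltnn.
Qed.

Lemma gs_inv_unmatched s r b : gs_inv s -> uniq (prefR r) -> b \in CR s r ->
  (forall b', pR s r = Some b' -> prefersR prefR r b b') -> pR s r = None.
Proof.
move=> I uniq_r b_in r_prefers; case pE: (pR s r) => [b'|] //.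
have [k CE] := gs_suffix I r; have := gs_partner_head I pE; rewrite CE => hd.
move: (r_prefers b' pE); rewrite /prefersR ltnNge (index_ohead_drop uniq_r hd) //.
by rewrite -CE.
Qed.

End GaleShapley.

Theorem lemma1 (R B : finType) (adj : R -> B -> bool)
    (prefR : R -> seq B) (prefB : B -> seq R)
    (hprefR : forall r, uniq (prefR r) /\ (forall b, (b \in prefR r) = adj r b))
    (hprefB : forall b, uniq (prefB b) /\ (forall r, (r \in prefB b) = adj r b))
    (noisoR : forall r, exists b, adj r b)
    (noisoB : forall b, exists r, adj r b)
    (i : nat) (hi : 1 <= i) (r : R) (b : B) :
  unstable adj prefR prefB (pR (gs_state prefR prefB i)) r b ->
  b \in CR (gs_state prefR prefB i) r /\ pR (gs_state prefR prefB i) r = None.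
Proof.
have inR x y : (y \in prefR x) = adj x y by case: (hprefR x).
have inB x y : (x \in prefB y) = adj x y by case: (hprefB y).
have acceptable x y : y \in prefR x -> x \in prefB y by rewrite inR inB.
(* The invariant holds from round 0 on. *)
have I := gs_inv_gs_state i acceptable.
case=> adj_rb _ r_prefers b_prefers.
have b_pref : b \in prefR r by rewrite inR.
have b_in := gs_inv_in_CR I b_pref b_prefers.
split=> //; apply: gs_inv_unmatched I _ b_in r_prefers.
by case: (hprefR r).
Qed.
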